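(* Let $z_\alpha,z_\beta$ be the upper $\alpha$ and $\beta$ quantiles of the standard normal distribution, with $0<\alpha,\beta<1/2$. Let $\theta=(p_1^{(0)},p_2^{(0)})$ with $0<p_k^{(0)}<1/2$, and $\lambda=(\delta_1,\delta_2)$ with $\delta_k<0$ and $p_k^{(0)}+\delta_k>0$ ($k=1,2$); write $q_k^{(0)}=1-p_k^{(0)}$. For a correlation value $\rho$ define $$p_*^{(0)}(\theta,\rho)=1-q_1^{(0)}q_2^{(0)}-\rho\sqrt{p_1^{(0)}p_2^{(0)}q_1^{(0)}q_2^{(0)}},$$ $$\delta_*(\theta,\lambda,\rho)=\delta_1q_2^{(0)}+\delta_2q_1^{(0)}-\delta_1\delta_2+\rho\sqrt{p_1^{(0)}p_2^{(0)}q_1^{(0)}q_2^{(0)}}-\rho\sqrt{(p_1^{(0)}+\delta_1)(p_2^{(0)}+\delta_2)(q_1^{(0)}-\delta_1)(q_2^{(0)}-\delta_2)},$$ and $$n(\theta,\lambda,\rho)=\frac{2(z_\alpha+z_\beta)^2\Big(p_*^{(0)}(1-p_*^{(0)})+(p_*^{(0)}+\delta_* )(1-p_*^{(0)}-\delta_* )\Big)}{\delta_*^2},$$ where $p_*^{(0)}=p_*^{(0)}(\theta,\rho)$, $\delta_*=\delta_*(\theta,\lambda,\rho)$. Then, for fixed $\theta$ and $\lambda$, $n(\theta,\lambda,\rho)$ is an increasing function of $\rho$ on the interval of admissible correlation values $\rho\in[B_L(\theta,\lambda),B_U(\theta,\lambda)]$, where $$B_L=\max\left\{-\sqrt{\tfrac{p_1^{(0)}p_2^{(0)}}{q_1^{(0)}q_2^{(0)}}},\,-\sqrt{\tfrac{q_1^{(0)}q_2^{(0)}}{p_1^{(0)}p_2^{(0)}}},\,-\sqrt{\tfrac{(p_1^{(0)}+\delta_1)(p_2^{(0)}+\delta_2)}{(q_1^{(0)}-\delta_1)(q_2^{(0)}-\delta_2)}},\,-\sqrt{\tfrac{(q_1^{(0)}-\delta_1)(q_2^{(0)}-\delta_2)}{(p_1^{(0)}+\delta_1)(p_2^{(0)}+\delta_2)}}\right\},$$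 $$B_U=\min\left\{\sqrt{\tfrac{p_1^{(0)}q_2^{(0)}}{p_2^{(0)}q_1^{(0)}}},\,\sqrt{\tfrac{p_2^{(0)}q_1^{(0)}}{p_1^{(0)}q_2^{(0)}}},\,\sqrt{\tfrac{(p_1^{(0)}+\delta_1)(q_2^{(0)}-\delta_2)}{(p_2^{(0)}+\delta_2)(q_1^{(0)}-\delta_1)}},\,\sqrt{\tfrac{(p_2^{(0)}+\delta_2)(q_1^{(0)}-\delta_1)}{(p_1^{(0)}+\delta_1)(q_2^{(0)}-\delta_2)}}\right\}.$$ In particular $n(\theta,\lambda,B_L)\le n(\theta,\lambda,\rho)\le n(\theta,\lambda,B_U)$ for all admissible $\rho$.
   Context: Setting: two-arm balanced trial (control group 0, treatment group 1) whose primary endpoint is a composite binary endpoint, defined as the occurrence of at least one of two binary events. $p_k^{(0)}$ are the control-group event rates of the components, $p_k^{(0)}+\delta_k$ the treatment-group rates, and $\rho$ is the Pearson correlation between the two component indicators, assumed equal in both groups; $B_L,B_U$ are the bounds within which such a common correlation is attainable in both groups. $p_*^{(0)}(\theta,\rho)$ is the composite event probability in the control group, $\delta_*(\theta,\lambda,\rho)$ the composite risk difference, and $n(\theta,\lambda,\rho)$ the total sample size for a one-sided test of $H_0:\delta_*=0$ vs $H_1:\delta_*<0$ at level $\alpha$ with power $1-\beta$ using the unpooled variance estimate. *)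

From Stdlib Require Import Reals.
Open Scope R_scope.

Definition std_normal_pdf (x : R) : R := exp (- (x ^ 2) / 2) / sqrt (2 * PI).

(* Phi is the standard normal CDF: Phi(x) = int_{-oo}^x pdf, characterised by
   Phi' = pdf everywhere and Phi(x) -> 0 as x -> -oo. *)
Definition is_std_normal_cdf (Phi : R -> R) : Prop :=
  (forall x, derivable_pt_lim Phi x (std_normal_pdf x)) /\
  (forall eps, 0 < eps -> exists M, forall x, x < M -> Rabs (Phi x) < eps).

Definition is_upper_quantile (Phi : R -> R) (a z : R) : Prop := Phi z = 1 - a.

Section Defs.
Variables (p1 p2 d1 d2 : R).
Let q1 := 1 - p1.
Let q2 := 1 - p2.

Definition p_star0 (rho : R) : R :=
  1 - q1 * q2 - rho * sqrt (p1 * p2 * q1 * q2).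

Definition delta_star (rho : R) : R :=
  d1 * q2 + d2 * q1 - d1 * d2 + rho * sqrt (p1 * p2 * q1 * q2)
  - rho * sqrt ((p1 + d1) * (p2 + d2) * (q1 - d1) * (q2 - d2)).

Definition sample_size (za zb rho : R) : R :=
  let ps := p_star0 rho in
  let ds := delta_star rho in
  2 * (za + zb) ^ 2 * (ps * (1 - ps) + (ps + ds) * (1 - ps - ds)) / ds ^ 2.

Definition B_L : R :=
  Rmax (Rmax (- sqrt (p1 * p2 / (q1 * q2))) (- sqrt (q1 * q2 / (p1 * p2))))
       (Rmax (- sqrt ((p1 + d1) * (p2 + d2) / ((q1 - d1) * (q2 - d2))))
             (- sqrt ((q1 - d1) * (q2 - d2) / ((p1 + d1) * (p2 + d2))))).

Definition B_U : R :=
  Rmin (Rmin (sqrt (p1 * q2 / (p2 * q1))) (sqrt (p2 * q1 / (p1 * q2))))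
       (Rmin (sqrt ((p1 + d1) * (q2 - d2) / ((p2 + d2) * (q1 - d1))))
             (sqrt ((p2 + d2) * (q1 - d1) / ((p1 + d1) * (q2 - d2))))).
End Defs.

(* Both composite event rates are affine in the correlation: in the control group
   [x = 1 - q1 q2 - rho s1 s2] and in the treatment group
   [y = x + delta_star = 1 - Q1 Q2 - rho t1 t2], where [s_k], [t_k] are the Bernoulli standard
   deviations of the component rates, and the sample size is proportional to
   [F x y = (x (1 - x) + y (1 - y)) / (y - x)^2].  Along such a line [F] increases with [rho]
   wherever [x > y] and a margin polynomial is positive.  The bounds [B_L <= rho <= B_U] imply
   that the joint cell probabilities of both groups are nonnegative; these give [x > y], and
   when [x + y < 1] they reduce the margin to an inequality between [sqrt (p (1 - p))] and
   [sqrt (P (1 - P))] for [P < p < 1/2].  Finally [z_alpha + z_beta > 0] because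
   [Phi 0 <= 1/2], which follows from [(int_0^t exp (- x^2 / 2))^2 <= PI / 2]: by Feynman's
   trick, [(int_0^t exp (- x^2 / 2))^2 + 2 int_0^1 exp (- t^2 (1 + u^2) / 2) / (1 + u^2) du]
   has zero derivative and equals [PI / 2] at [t = 0]. *)

From Coquelicot Require Import Coquelicot.
From Stdlib Require Import Reals Lra Psatz.
Open Scope R_scope.

Definition bern_sd (p : R) : R := sqrt (p * (1 - p)).

Lemma bern_sd_ge0 p : 0 <= bern_sd p.
Proof. apply sqrt_pos. Qed.

Lemma bern_sd_pos p : 0 < p < 1 -> 0 < bern_sd p.
Proof. intros. apply sqrt_lt_R0. nra. Qed.

Lemma bern_sd_sq p : 0 <= p <= 1 -> bern_sd p * bern_sd p = p * (1 - p).
Proof. intros hp. apply sqrt_sqrt. nra. Qed.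

Lemma bern_sd_lt P p : 0 <= P -> P < p -> p <= 1 / 2 -> bern_sd P < bern_sd p.
Proof. intros. apply sqrt_lt_1; nra. Qed.

Lemma bern_sd_mul p1 p2 : 0 <= p1 <= 1 -> 0 <= p2 <= 1 ->
  bern_sd p1 * bern_sd p2 = sqrt (p1 * p2 * (1 - p1) * (1 - p2)).
Proof.
  intros. unfold bern_sd. rewrite <- sqrt_mult_alt by nra. f_equal; ring.
Qed.

Section TwoRates.
Variables p P : R.
Hypotheses (hP : 0 < P) (hPp : P < p) (hp : p < 1 / 2).

Let s := bern_sd p.
Let t := bern_sd P.

Let hs2 : s * s = p * (1 - p).
Proof. apply bern_sd_sq; lra. Qed.

Let ht2 : t * t = P * (1 - P).
Proof. apply bern_sd_sq; lra. Qed.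

Let ht0 : 0 <= t.
Proof. apply bern_sd_ge0. Qed.

Let hts : t < s.
Proof. apply bern_sd_lt; lra. Qed.

Lemma bern_sd_mul_compl_le : t * (1 - p) <= s * (1 - P).
Proof.
  assert (h : (t * (1 - p)) * (t * (1 - p)) <= (s * (1 - P)) * (s * (1 - P))).
  { replace ((t * (1 - p)) * (t * (1 - p))) with ((t * t) * ((1 - p) * (1 - p))) by ring.
    replace ((s * (1 - P)) * (s * (1 - P))) with ((s * s) * ((1 - P) * (1 - P))) by ring.
    rewrite hs2, ht2.
    assert (0 <= (1 - p) * (1 - P) * (p - P)) by (apply Rmult_le_pos; nra).
    nra. }
  nra.
Qed.

Lemma bern_sd_diff_le : s * (s - t) <= (p - P) * (1 - p - P).
Proof.
  replace ((p - P) * (1 - p - P)) with (s * s - t * t) by (rewrite hs2, ht2; ring).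
  nra.
Qed.

Lemma bern_sd_gap_scaled_le p' sigma r :
  0 <= sigma -> 0 <= r -> r * (s * sigma) <= p * (1 - p') ->
  r * sigma * (s - t) * (1 - p) <= (1 - p') * ((p - P) * (1 - p - P)).
Proof.
  intros hsig hr hcap.
  apply (Rmult_le_reg_l p); [lra|].
  replace (p * (r * sigma * (s - t) * (1 - p))) with (r * sigma * (s - t) * (p * (1 - p)))
    by ring.
  rewrite <- hs2.
  replace (r * sigma * (s - t) * (s * s)) with (r * (s * sigma) * (s * (s - t))) by ring.
  assert (0 <= r * (s * sigma)) by (apply Rmult_le_pos; [|apply Rmult_le_pos]; lra).
  assert (0 <= (p - P) * (1 - p - P)) by (apply Rmult_le_pos; lra).
  pose proof bern_sd_diff_le.
  apply (Rle_trans _ (r * (s * sigma) * ((p - P) * (1 - p - P)))).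
  - apply Rmult_le_compat_l; lra.
  - replace (p * ((1 - p') * ((p - P) * (1 - p - P))))
      with (p * (1 - p') * ((p - P) * (1 - p - P))) by ring.
    apply Rmult_le_compat_r; lra.
Qed.

Let gap W := (1 + W) * (s - t) - 2 * W * (s * (1 - P) - t * (1 - p)).

Let gap_max_pos : 0 < gap (1 - p - P).
Proof.
  set (c1 := p + 3 * P - 2 * p * P - 2 * P * P).
  set (c2 := 3 * p + P - 2 * p * p - 2 * p * P).
  replace (gap (1 - p - P)) with (s * c1 - t * c2) by (unfold gap, c1, c2; ring).
  assert (hc : 0 < c1) by (unfold c1; nra).
  assert (0 < (p - P) ^ 3 * (1 - p - P)) by (apply Rmult_lt_0_compat; [apply pow_lt|]; lra).
  assert (h : (t * c2) * (t * c2) < (s * c1) * (s * c1)).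
  { replace ((t * c2) * (t * c2)) with ((t * t) * (c2 * c2)) by ring.
    replace ((s * c1) * (s * c1)) with ((s * s) * (c1 * c1)) by ring.
    rewrite hs2, ht2.
    assert (p * (1 - p) * (c1 * c1) - P * (1 - P) * (c2 * c2)
            = (p - P) ^ 3 * (1 - p - P)) by (unfold c1, c2; ring).
    lra. }
  assert (0 < s * c1) by (apply Rmult_lt_0_compat; lra).
  nra.
Qed.

Lemma bern_sd_weighted_gap_pos W g :
  0 <= W <= 1 - p - P -> 0 <= g <= 1 ->
  0 < (1 + W) * (s - t) - 2 * W * g * (s * (1 - P) - t * (1 - p)).
Proof.
  intros hW hg.
  assert (hgap : 0 < gap W).
  { (* [gap] is affine in [W] and positive at both ends of [[0, 1 - p - P]] *)
    assert (e : (1 - p - P) * gap W = (1 - p - P - W) * gap 0 + W * gap (1 - p - P))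
      by (unfold gap; ring).
    assert (h0 : gap 0 = s - t) by (unfold gap; ring).
    pose proof gap_max_pos.
    assert (0 < (1 - p - P) * gap W).
    { rewrite e, h0. destruct (Rle_lt_or_eq_dec 0 W (proj1 hW)) as [hW0 | <-].
      - assert (0 <= (1 - p - P - W) * (s - t)) by (apply Rmult_le_pos; lra).
        assert (0 < W * gap (1 - p - P)) by (apply Rmult_lt_0_compat; lra).
        lra.
      - nra. }
    nra. }
  assert (0 <= W * (s * (1 - P) - t * (1 - p))).
  { apply Rmult_le_pos; [lra|]. pose proof bern_sd_mul_compl_le. lra. }
  unfold gap in hgap. nra.
Qed.

End TwoRates.

Lemma bern_sd_prod_weighted_gap_pos p1 p2 P1 P2 W :
  0 < P1 -> P1 < p1 -> p1 < 1 / 2 -> 0 < P2 -> P2 < p2 -> p2 < 1 / 2 ->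
  0 <= W -> W <= 1 - p1 - P1 -> W <= 1 - p2 - P2 ->
  0 < bern_sd p1 * bern_sd p2 * (1 + W - 2 * W * ((1 - P1) * (1 - P2)))
      - bern_sd P1 * bern_sd P2 * (1 + W - 2 * W * ((1 - p1) * (1 - p2))).
Proof.
  intros.
  pose proof (bern_sd_weighted_gap_pos p1 P1 ltac:(lra) ltac:(lra) ltac:(lra)
                W (1 - P2) ltac:(lra) ltac:(lra)) as h1.
  pose proof (bern_sd_weighted_gap_pos p2 P2 ltac:(lra) ltac:(lra) ltac:(lra)
                W (1 - p1) ltac:(lra) ltac:(lra)) as h2.
  assert (0 < bern_sd p2) by (apply bern_sd_pos; lra).
  assert (0 < bern_sd P1) by (apply bern_sd_pos; lra).
  set (s1 := bern_sd p1) in *; set (s2 := bern_sd p2) in *;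
  set (t1 := bern_sd P1) in *; set (t2 := bern_sd P2) in *.
  replace (s1 * s2 * (1 + W - 2 * W * ((1 - P1) * (1 - P2)))
           - t1 * t2 * (1 + W - 2 * W * ((1 - p1) * (1 - p2))))
    with (s2 * ((1 + W) * (s1 - t1) - 2 * W * (1 - P2) * (s1 * (1 - P1) - t1 * (1 - p1)))
          + t1 * ((1 + W) * (s2 - t2) - 2 * W * (1 - p1) * (s2 * (1 - P2) - t2 * (1 - p2))))
    by ring.
  apply Rplus_lt_0_compat; apply Rmult_lt_0_compat; assumption.
Qed.

Definition ss_factor (x y : R) : R := (x * (1 - x) + y * (1 - y)) / (y - x) ^ 2.

(* If [x] and [y] move with velocities [- a] and [- b], then [ss_factor x y] moves with
   velocity [ss_margin a b x y / (x - y) ^ 3]. *)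
Definition ss_margin (a b x y : R) : R :=
  (a - b) * (x + y) + 2 * (1 - x - y) * (a * y - b * x).

(* The cells [p1 p2 + c], [p1 (1 - p2) - c] and [p2 (1 - p1) - c] of the joint law of two
   Bernoulli indicators with correlation [r], hence covariance [c], are nonnegative. *)
Definition frechet_admissible (p1 p2 r : R) : Prop :=
  let c := r * (bern_sd p1 * bern_sd p2) in
  - (p1 * p2) <= c /\ c <= p1 * (1 - p2) /\ c <= p2 * (1 - p1).

Section AdmissibleCorrelation.
Variables p1 p2 P1 P2 r : R.
Hypotheses (hP1 : 0 < P1) (hPp1 : P1 < p1) (hp1 : p1 < 1 / 2)
           (hP2 : 0 < P2) (hPp2 : P2 < p2) (hp2 : p2 < 1 / 2).
Hypotheses (adm0 : frechet_admissible p1 p2 r) (adm1 : frechet_admissible P1 P2 r).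

Let s1 := bern_sd p1.
Let s2 := bern_sd p2.
Let t1 := bern_sd P1.
Let t2 := bern_sd P2.
Let x := 1 - (1 - p1) * (1 - p2) - r * (s1 * s2).
Let y := 1 - (1 - P1) * (1 - P2) - r * (t1 * t2).

Let hst1 : 0 <= t1 < s1.
Proof. split; [apply bern_sd_ge0 | apply bern_sd_lt; lra]. Qed.

Let hst2 : 0 <= t2 < s2.
Proof. split; [apply bern_sd_ge0 | apply bern_sd_lt; lra]. Qed.

Lemma composite_rate_decreases : y < x.
Proof.
  assert (e : x - y = (p1 - P1) * (1 - P2) + (p2 - P2) * (1 - p1) - r * (s1 * s2 - t1 * t2))
    by (unfold x, y; ring).
  assert (hab : 0 < s1 * s2 - t1 * t2) by nra.
  destruct (Rle_or_lt r 0) as [hr | hr].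
  - assert (r * (s1 * s2 - t1 * t2) <= 0) by nra. nra.
  - destruct adm0 as (_ & cap1 & cap2).
    pose proof (bern_sd_gap_scaled_le p1 P1 ltac:(lra) ltac:(lra) ltac:(lra)
                  p2 s2 r ltac:(lra) ltac:(lra) cap1) as g1.
    pose proof (bern_sd_gap_scaled_le p2 P2 ltac:(lra) ltac:(lra) ltac:(lra)
                  p1 s1 r ltac:(lra) ltac:(lra) ltac:(fold s2; rewrite (Rmult_comm s2); exact cap2))
      as g2.
    fold s1 t1 s2 t2 in g1, g2.
    assert (h1 : r * s2 * (s1 - t1) < (p1 - P1) * (1 - P2)).
    { apply (Rmult_lt_reg_r (1 - p1)); [lra|].
      assert ((1 - p2) * (1 - p1 - P1) < (1 - P2) * (1 - p1)) by nra.
      assert (0 < p1 - P1) by lra.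
      nra. }
    assert (h2 : r * s1 * (s2 - t2) <= (p2 - P2) * (1 - p1)).
    { apply (Rmult_le_reg_r (1 - p2)); [lra|].
      assert ((1 - p1) * (1 - p2 - P2) <= (1 - p1) * (1 - p2)) by nra.
      assert (0 < p2 - P2) by lra.
      nra. }
    assert (r * (s1 * s2 - t1 * t2) <= r * s2 * (s1 - t1) + r * s1 * (s2 - t2)).
    { assert (0 <= r * ((s1 - t1) * (s2 - t2))) by (apply Rmult_le_pos; nra). nra. }
    lra.
Qed.

Lemma ss_margin_pos : 0 < ss_margin (s1 * s2) (t1 * t2) x y.
Proof.
  destruct adm0 as (low0 & cap01 & cap02); destruct adm1 as (low1 & cap11 & cap12).
  fold s1 s2 t1 t2 in low0, cap01, cap02, low1, cap11, cap12.
  assert (hx : p1 <= x /\ p2 <= x /\ x < 1) by (unfold x; nra).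
  assert (hy : P1 <= y /\ P2 <= y /\ y < 1) by (unfold y; nra).
  unfold ss_margin.
  destruct (Rlt_or_le (x + y) 1) as [hS | hS].
  - replace ((s1 * s2 - t1 * t2) * (x + y) + 2 * (1 - x - y) * (s1 * s2 * y - t1 * t2 * x))
      with (s1 * s2 * (1 + (1 - x - y) - 2 * (1 - x - y) * ((1 - P1) * (1 - P2)))
            - t1 * t2 * (1 + (1 - x - y) - 2 * (1 - x - y) * ((1 - p1) * (1 - p2))))
      by (unfold x, y; ring).
    apply bern_sd_prod_weighted_gap_pos; lra.
  - set (k := s1 * s2 * y - t1 * t2 * x).
    assert (hk : k < s1 * s2 - t1 * t2).
    { apply Rlt_0_minus.
      replace (s1 * s2 - t1 * t2 - k)
        with (s1 * s2 * ((1 - P1) * (1 - P2)) - t1 * t2 * ((1 - p1) * (1 - p2)))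
        by (unfold k, x, y; ring).
      assert ((1 - p1) * (1 - p2) < (1 - P1) * (1 - P2)) by nra.
      assert (0 < (1 - p1) * (1 - p2)) by nra.
      assert (t1 * t2 < s1 * s2) by nra.
      assert (0 <= t1 * t2) by nra.
      nra. }
    destruct (Rle_or_lt 0 k) as [hk0 | hk0].
    + replace ((s1 * s2 - t1 * t2) * (x + y) + 2 * (1 - x - y) * k)
        with ((2 - (x + y)) * k + (x + y) * (s1 * s2 - t1 * t2 - k)) by ring.
      nra.
    + assert (0 < s1 * s2 - t1 * t2) by nra.
      nra.
Qed.

End AdmissibleCorrelation.

Lemma mul_sqrt_le_of_le_sqrt_div u v w r :
  0 <= u -> 0 < v -> u * v = w -> r <= sqrt (u / v) -> r * sqrt w <= u.
Proof.
  intros hu hv <- hr.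
  destruct (Rle_or_lt r 0) as [h | h].
  - pose proof (sqrt_pos (u * v)). nra.
  - replace u with (sqrt (u / v) * sqrt (u * v)) at 2.
    + apply Rmult_le_compat_r; [apply sqrt_pos | exact hr].
    + rewrite <- sqrt_mult_alt.
      * replace (u / v * (u * v)) with (u * u) by (field; lra). apply sqrt_square; lra.
      * apply Rmult_le_pos; [lra | apply Rlt_le, Rinv_0_lt_compat; lra].
Qed.

Lemma opp_le_mul_sqrt_of_opp_sqrt_div_le u v w r :
  0 <= u -> 0 < v -> u * v = w -> - sqrt (u / v) <= r -> - u <= r * sqrt w.
Proof.
  intros hu hv huv hr.
  pose proof (mul_sqrt_le_of_le_sqrt_div u v w (- r) hu hv huv ltac:(lra)). lra.
Qed.

Lemma le_Rmin4 r a b c d :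
  r <= Rmin (Rmin a b) (Rmin c d) -> r <= a /\ r <= b /\ r <= c /\ r <= d.
Proof.
  pose proof (Rmin_l a b); pose proof (Rmin_r a b); pose proof (Rmin_l c d);
  pose proof (Rmin_r c d); pose proof (Rmin_l (Rmin a b) (Rmin c d));
  pose proof (Rmin_r (Rmin a b) (Rmin c d)); lra.
Qed.

Lemma Rmax4_le r a b c d :
  Rmax (Rmax a b) (Rmax c d) <= r -> a <= r /\ b <= r /\ c <= r /\ d <= r.
Proof.
  pose proof (Rmax_l a b); pose proof (Rmax_r a b); pose proof (Rmax_l c d);
  pose proof (Rmax_r c d); pose proof (Rmax_l (Rmax a b) (Rmax c d));
  pose proof (Rmax_r (Rmax a b) (Rmax c d)); lra.
Qed.

Lemma frechet_admissible_of_bounds p1 p2 d1 d2 r :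
  0 < p1 < 1 / 2 -> 0 < p2 < 1 / 2 -> d1 < 0 -> d2 < 0 -> 0 < p1 + d1 -> 0 < p2 + d2 ->
  B_L p1 p2 d1 d2 <= r -> r <= B_U p1 p2 d1 d2 ->
  frechet_admissible p1 p2 r /\ frechet_admissible (p1 + d1) (p2 + d2) r.
Proof.
  intros hp1 hp2 hd1 hd2 hP1 hP2 hL hU.
  apply Rmax4_le in hL as (l1 & _ & l3 & _).
  apply le_Rmin4 in hU as (u1 & u2 & u3 & u4).
  replace (1 - p1 - d1) with (1 - (p1 + d1)) in l3, u3, u4 by ring.
  replace (1 - p2 - d2) with (1 - (p2 + d2)) in l3, u3, u4 by ring.
  unfold frechet_admissible.
  rewrite !bern_sd_mul by lra.
  repeat split.
  - refine (opp_le_mul_sqrt_of_opp_sqrt_div_le _ _ _ _ _ _ _ l1); [nra | nra | ring].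
  - refine (mul_sqrt_le_of_le_sqrt_div _ _ _ _ _ _ _ u1); [nra | nra | ring].
  - refine (mul_sqrt_le_of_le_sqrt_div _ _ _ _ _ _ _ u2); [nra | nra | ring].
  - refine (opp_le_mul_sqrt_of_opp_sqrt_div_le _ _ _ _ _ _ _ l3); [nra | nra | ring].
  - refine (mul_sqrt_le_of_le_sqrt_div _ _ _ _ _ _ _ u3); [nra | nra | ring].
  - refine (mul_sqrt_le_of_le_sqrt_div _ _ _ _ _ _ _ u4); [nra | nra | ring].
Qed.

Lemma ss_factor_lt a b x y h :
  0 < h -> y < x -> y + h * b < x + h * a ->
  0 < ss_margin a b x y -> 0 < ss_margin a b (x + h * a) (y + h * b) ->
  ss_factor (x + h * a) (y + h * b) < ss_factor x y.
Proof.
  intros hh hxy hxy' hm hm'.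
  apply Rlt_0_minus.
  assert (e : ss_factor x y - ss_factor (x + h * a) (y + h * b)
              = h * ((x - y) * ss_margin a b (x + h * a) (y + h * b)
                     + (x + h * a - (y + h * b)) * ss_margin a b x y)
                / (2 * (x + h * a - (y + h * b)) ^ 2 * (x - y) ^ 2))
    by (unfold ss_factor, ss_margin; field; lra).
  rewrite e.
  apply Rdiv_lt_0_compat.
  - apply Rmult_lt_0_compat; [lra|].
    apply Rplus_lt_0_compat; apply Rmult_lt_0_compat; lra.
  - apply Rmult_lt_0_compat; [apply Rmult_lt_0_compat; [lra|] |]; apply pow_lt; lra.
Qed.

Lemma p_star0_bern_sd p1 p2 r : 0 <= p1 <= 1 -> 0 <= p2 <= 1 ->
  p_star0 p1 p2 r = 1 - (1 - p1) * (1 - p2) - r * (bern_sd p1 * bern_sd p2).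
Proof. intros. unfold p_star0. rewrite bern_sd_mul by lra. ring. Qed.

Lemma p_star0_add_delta_star p1 p2 d1 d2 r :
  p_star0 p1 p2 r + delta_star p1 p2 d1 d2 r = p_star0 (p1 + d1) (p2 + d2) r.
Proof.
  unfold p_star0, delta_star.
  replace ((p1 + d1) * (p2 + d2) * (1 - p1 - d1) * (1 - p2 - d2))
    with ((p1 + d1) * (p2 + d2) * (1 - (p1 + d1)) * (1 - (p2 + d2))) by ring.
  ring.
Qed.

Lemma sample_size_ss_factor p1 p2 d1 d2 za zb r :
  sample_size p1 p2 d1 d2 za zb r
  = 2 * (za + zb) ^ 2 * ss_factor (p_star0 p1 p2 r) (p_star0 (p1 + d1) (p2 + d2) r).
Proof.
  rewrite <- p_star0_add_delta_star.
  unfold sample_size, ss_factor.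
  replace (p_star0 p1 p2 r + delta_star p1 p2 d1 d2 r - p_star0 p1 p2 r)
    with (delta_star p1 p2 d1 d2 r) by ring.
  unfold Rdiv. ring.
Qed.

Lemma sample_size_increasing p1 p2 d1 d2 za zb r s :
  za + zb <> 0 -> 0 < p1 < 1 / 2 -> 0 < p2 < 1 / 2 ->
  d1 < 0 -> d2 < 0 -> 0 < p1 + d1 -> 0 < p2 + d2 ->
  B_L p1 p2 d1 d2 <= r -> r < s -> s <= B_U p1 p2 d1 d2 ->
  sample_size p1 p2 d1 d2 za zb r < sample_size p1 p2 d1 d2 za zb s.
Proof.
  intros hz hp1 hp2 hd1 hd2 hP1 hP2 hL hrs hU.
  destruct (frechet_admissible_of_bounds p1 p2 d1 d2 r) as [ar0 ar1]; try lra.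
  destruct (frechet_admissible_of_bounds p1 p2 d1 d2 s) as [as0 as1]; try lra.
  rewrite !sample_size_ss_factor.
  apply Rmult_lt_compat_l.
  { assert (0 < (za + zb) ^ 2) by (rewrite <- Rsqr_pow2; apply Rsqr_pos_lt, hz). lra. }
  rewrite !p_star0_bern_sd by lra.
  set (P1 := p1 + d1) in *; set (P2 := p2 + d2) in *.
  set (a := bern_sd p1 * bern_sd p2); set (b := bern_sd P1 * bern_sd P2).
  pose proof (ss_factor_lt a b (1 - (1 - p1) * (1 - p2) - s * a)
                (1 - (1 - P1) * (1 - P2) - s * b) (s - r)) as lt.
  replace (1 - (1 - p1) * (1 - p2) - s * a + (s - r) * a)
    with (1 - (1 - p1) * (1 - p2) - r * a) in lt by ring.
  replace (1 - (1 - P1) * (1 - P2) - s * b + (s - r) * b)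
    with (1 - (1 - P1) * (1 - P2) - r * b) in lt by ring.
  apply lt; [lra | | | |];
    first [ apply composite_rate_decreases | apply ss_margin_pos ];
    solve [ assumption | unfold P1, P2; lra ].
Qed.

Lemma constant_of_derive_0 (f : R -> R) :
  (forall x, derivable_pt_lim f x 0) -> forall x y, f x = f y.
Proof.
  intros h. exact (null_derivative_1 f (fun x => exist _ 0 (h x)) (fun _ => eq_refl)).
Qed.

Lemma increasing_of_derive_ge0 (f df : R -> R) :
  (forall x, derivable_pt_lim f x (df x)) -> (forall x, 0 <= df x) ->
  forall x y, x <= y -> f x <= f y.
Proof. intros h hd. exact (nonneg_derivative_1 f (fun x => exist _ (df x) (h x)) hd). Qed.

Definition gauss (x : R) : R := exp (- (x * x) / 2).
Definition gauss_int (t : R) : R := RInt gauss 0 t.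
Definition gauss_param (t u : R) : R := exp (- (t * t * (1 + u * u)) / 2) / (1 + u * u).
Definition gauss_param_dt (t u : R) : R := - t * exp (- (t * t * (1 + u * u)) / 2).
Definition gauss_param_int (t : R) : R := RInt (gauss_param t) 0 1.

Lemma one_add_sq_pos u : 0 < 1 + u * u.
Proof. nra. Qed.

Lemma continuous_gauss x : continuous gauss x.
Proof.
  apply (ex_derive_continuous (K := R_AbsRing) (V := R_NormedModule)).
  unfold gauss. auto_derive. exact I.
Qed.

Lemma ex_RInt_gauss a b : ex_RInt gauss a b.
Proof.
  apply (ex_RInt_continuous (V := R_CompleteNormedModule)). intros; apply continuous_gauss.
Qed.

Lemma is_derive_gauss_int t : is_derive gauss_int t (gauss t).
Proof.
  apply is_derive_RInt with (a := 0).
  - apply filter_forall. intro b.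
    apply (RInt_correct (V := R_CompleteNormedModule)), ex_RInt_gauss.
  - apply continuous_gauss.
Qed.

Lemma gauss_int_0 : gauss_int 0 = 0.
Proof. apply (RInt_point (V := R_CompleteNormedModule)). Qed.

Lemma is_derive_gauss_param t u : is_derive (fun z => gauss_param z u) t (gauss_param_dt t u).
Proof.
  unfold gauss_param, gauss_param_dt. pose proof (one_add_sq_pos u).
  auto_derive.
  - lra.
  - change RinvImpl.Rinv with Rinv. unfold Rdiv. field. lra.
Qed.

(* The [+ 0] matches the affine substitution of [RInt_comp_lin]. *)
Lemma gauss_param_dtE t u : gauss_param_dt t u = - gauss t * (t * gauss (t * u + 0)).
Proof.
  unfold gauss_param_dt, gauss.
  replace (- exp (- (t * t) / 2) * (t * exp (- ((t * u + 0) * (t * u + 0)) / 2)))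
    with (- t * (exp (- (t * t) / 2) * exp (- ((t * u + 0) * (t * u + 0)) / 2))) by ring.
  rewrite <- exp_plus. f_equal. f_equal. field.
Qed.

Lemma continuity_2d_pt_gauss_param_dt t u : continuity_2d_pt gauss_param_dt t u.
Proof.
  unfold gauss_param_dt.
  apply continuity_2d_pt_mult.
  - apply continuity_2d_pt_opp, continuity_2d_pt_id1.
  - apply continuity_1d_2d_pt_comp
      with (f := exp) (g := fun a v => - (a * a * (1 + v * v)) / 2).
    + apply derivable_continuous_pt, derivable_pt_exp.
    + apply continuity_2d_pt_ext with (f := fun a v => (- (a * a * (1 + v * v))) * (/ 2)).
      { intros; reflexivity. }
      apply continuity_2d_pt_mult; [| apply continuity_2d_pt_const].
      apply continuity_2d_pt_opp, continuity_2d_pt_mult.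
      * apply continuity_2d_pt_mult; apply continuity_2d_pt_id1.
      * apply continuity_2d_pt_plus; [apply continuity_2d_pt_const |].
        apply continuity_2d_pt_mult; apply continuity_2d_pt_id2.
Qed.

Lemma ex_RInt_gauss_param t a b : ex_RInt (gauss_param t) a b.
Proof.
  apply (ex_RInt_continuous (V := R_CompleteNormedModule)). intros z _.
  apply (ex_derive_continuous (K := R_AbsRing) (V := R_NormedModule)).
  unfold gauss_param. auto_derive. pose proof (one_add_sq_pos z). lra.
Qed.

(* Differentiating under the integral sign and substituting [v = t u] turns the inner
   integral into [gauss_int t]. *)
Lemma is_derive_gauss_param_int t : is_derive gauss_param_int t (- gauss t * gauss_int t).
Proof.
  assert (Hd : forall u, Derive (fun z => gauss_param z u) t = gauss_param_dt t u)
    by (intro u; apply is_derive_unique, is_derive_gauss_param).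
  replace (- gauss t * gauss_int t)
    with (RInt (fun u => Derive (fun z => gauss_param z u) t) 0 1).
  - apply (is_derive_RInt_param gauss_param 0 1 t).
    + apply filter_forall. intros x u _. eexists. apply is_derive_gauss_param.
    + intros u _. apply continuity_2d_pt_ext with (f := gauss_param_dt).
      { intros x v; symmetry; apply is_derive_unique, is_derive_gauss_param. }
      apply continuity_2d_pt_gauss_param_dt.
    + apply filter_forall. intros y. apply ex_RInt_gauss_param.
  - rewrite (RInt_ext _ (fun u => scal (- gauss t) (scal t (gauss (t * u + 0))))).
    2:{ intros x _. rewrite Hd, gauss_param_dtE. reflexivity. }
    rewrite (RInt_scal (V := R_CompleteNormedModule)).
    2:{ apply (ex_RInt_comp_lin (V := R_CompleteNormedModule)), ex_RInt_gauss. }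
    rewrite (RInt_comp_lin (V := R_CompleteNormedModule)) by apply ex_RInt_gauss.
    unfold gauss_int. rewrite Rmult_0_r, Rplus_0_r, Rmult_1_r, Rplus_0_r.
    reflexivity.
Qed.

Lemma gauss_param_int_0 : gauss_param_int 0 = PI / 4.
Proof.
  unfold gauss_param_int.
  rewrite (RInt_ext _ (fun u => / (1 + u ^ 2))).
  2:{ intros x _. unfold gauss_param. replace (- (0 * 0 * (1 + x * x)) / 2) with 0 by field.
      rewrite exp_0. unfold Rdiv. rewrite Rmult_1_l. f_equal. ring. }
  rewrite <- atan_1. replace (atan 1) with (atan 1 - atan 0) by (rewrite atan_0; ring).
  apply is_RInt_unique.
  apply (is_RInt_derive (V := R_CompleteNormedModule) atan).
  - intros x _. apply is_derive_Reals, derivable_pt_lim_atan.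
  - intros x _. apply (ex_derive_continuous (K := R_AbsRing) (V := R_NormedModule)).
    auto_derive. pose proof (one_add_sq_pos x). lra.
Qed.

Lemma gauss_param_int_ge0 t : 0 <= gauss_param_int t.
Proof.
  unfold gauss_param_int. apply RInt_ge_0; [lra | apply ex_RInt_gauss_param |].
  intros x _. unfold gauss_param.
  apply Rlt_le, Rdiv_lt_0_compat; [apply exp_pos | apply one_add_sq_pos].
Qed.

Lemma gauss_int_sq_le t : gauss_int t * gauss_int t <= PI / 2.
Proof.
  assert (h : gauss_int t * gauss_int t + 2 * gauss_param_int t
              = gauss_int 0 * gauss_int 0 + 2 * gauss_param_int 0).
  { apply (constant_of_derive_0 (fun t => gauss_int t * gauss_int t + 2 * gauss_param_int t)).
    intro x.
    pose proof (proj1 (is_derive_Reals _ _ _) (is_derive_gauss_int x)).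
    pose proof (proj1 (is_derive_Reals _ _ _) (is_derive_gauss_param_int x)).
    replace 0 with (gauss x * gauss_int x + gauss_int x * gauss x
                    + (0 * gauss_param_int x + 2 * (- gauss x * gauss_int x))) by ring.
    apply derivable_pt_lim_plus.
    - apply derivable_pt_lim_mult; assumption.
    - apply derivable_pt_lim_mult; [apply derivable_pt_lim_const | assumption]. }
  rewrite gauss_int_0, gauss_param_int_0 in h. pose proof (gauss_param_int_ge0 t). lra.
Qed.

Lemma std_normal_pdf_gauss x : std_normal_pdf x = gauss x / sqrt (2 * PI).
Proof. unfold std_normal_pdf, gauss. f_equal. f_equal. f_equal. ring. Qed.

Lemma std_normal_cdf_0_le (Phi : R -> R) : is_std_normal_cdf Phi -> Phi 0 <= 1 / 2.
Proof.
  intros [hd hlim].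
  set (c := sqrt (2 * PI)).
  assert (hc : 0 < c) by (apply sqrt_lt_R0; pose proof PI_RGT_0; lra).
  assert (hc2 : c * c = 2 * PI) by (apply sqrt_sqrt; pose proof PI_RGT_0; lra).
  assert (tail : forall t, Phi 0 - Phi (- t) = gauss_int t / c).
  { assert (hder : forall x, derivable_pt_lim (fun t => Phi (- t) + gauss_int t / c) x 0).
    { intro x.
      replace 0 with (std_normal_pdf (- x) * (- 1) + gauss x * / c).
      2:{ rewrite std_normal_pdf_gauss. unfold gauss. fold c.
          replace (- x * - x) with (x * x) by ring. field. lra. }
      apply derivable_pt_lim_plus.
      - apply (derivable_pt_lim_comp Ropp Phi x (-1)); [| apply hd].
        apply is_derive_Reals. auto_derive; [exact I | ring].
      - apply derivable_pt_lim_scal_right, is_derive_Reals, is_derive_gauss_int. }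
    intro t. pose proof (constant_of_derive_0 _ hder t 0) as e; cbv beta in e.
    rewrite Ropp_0, gauss_int_0 in e. unfold Rdiv in *. lra. }
  assert (bound : forall t, Phi 0 - Phi (- t) <= 1 / 2).
  { intro t. rewrite tail.
    pose proof (gauss_int_sq_le t).
    assert (gauss_int t <= c / 2) by nra.
    apply (Rmult_le_reg_r c); [exact hc |]. unfold Rdiv. rewrite Rmult_assoc, Rinv_l by lra. lra. }
  apply Rnot_lt_le. intro hlt.
  destruct (hlim (Phi 0 - 1 / 2) ltac:(lra)) as [M hM].
  specialize (hM (- (Rabs M + 1))).
  specialize (bound (Rabs M + 1)).
  pose proof (Rabs_maj2 M).
  apply Rabs_def2 in hM; lra.
Qed.

Lemma upper_quantile_pos (Phi : R -> R) (a z : R) :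
  is_std_normal_cdf Phi -> a < 1 / 2 -> is_upper_quantile Phi a z -> 0 < z.
Proof.
  intros hPhi ha hz. unfold is_upper_quantile in hz.
  pose proof (std_normal_cdf_0_le Phi hPhi).
  apply Rnot_le_lt. intro hz0.
  assert (Phi z <= Phi 0).
  { apply (increasing_of_derive_ge0 Phi std_normal_pdf (proj1 hPhi)); [| exact hz0].
    intro x. rewrite std_normal_pdf_gauss. apply Rlt_le, Rdiv_lt_0_compat.
    - apply exp_pos.
    - apply sqrt_lt_R0. pose proof PI_RGT_0. lra. }
  lra.
Qed.

Theorem theorem1 (Phi : R -> R) (alpha beta za zb p1 p2 d1 d2 : R) :
  is_std_normal_cdf Phi ->
  0 < alpha < 1 / 2 -> 0 < beta < 1 / 2 ->
  is_upper_quantile Phi alpha za -> is_upper_quantile Phi beta zb ->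
  0 < p1 < 1 / 2 -> 0 < p2 < 1 / 2 ->
  d1 < 0 -> d2 < 0 -> 0 < p1 + d1 -> 0 < p2 + d2 ->
  (forall r s,
     B_L p1 p2 d1 d2 <= r -> r < s -> s <= B_U p1 p2 d1 d2 ->
     sample_size p1 p2 d1 d2 za zb r < sample_size p1 p2 d1 d2 za zb s) /\
  (forall r,
     B_L p1 p2 d1 d2 <= r -> r <= B_U p1 p2 d1 d2 ->
     sample_size p1 p2 d1 d2 za zb (B_L p1 p2 d1 d2) <= sample_size p1 p2 d1 d2 za zb r /\
     sample_size p1 p2 d1 d2 za zb r <= sample_size p1 p2 d1 d2 za zb (B_U p1 p2 d1 d2)).
Proof.
  intros hPhi ha hb hza hzb hp1 hp2 hd1 hd2 hP1 hP2.
  assert (hz : za + zb <> 0).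
  { pose proof (upper_quantile_pos Phi alpha za hPhi (proj2 ha) hza).
    pose proof (upper_quantile_pos Phi beta zb hPhi (proj2 hb) hzb). lra. }
  pose proof (fun r s => sample_size_increasing p1 p2 d1 d2 za zb r s
                           hz hp1 hp2 hd1 hd2 hP1 hP2) as incr.
  split; [exact incr |].
  intros r hL hU. split.
  - destruct (Rle_lt_or_eq_dec _ _ hL) as [h | <-]; [apply Rlt_le, incr |]; lra.
  - destruct (Rle_lt_or_eq_dec _ _ hU) as [h | ->]; [apply Rlt_le, incr |]; lra.
Qed.
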